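(* Given an arbitrary collection of weight vectors $\{X^i(\theta^i)\}_{i\in[n],\theta^i\in\Theta^i}$, with $X^i(\theta^i)=(X^i_{\omega,j}(\theta^i))_{\omega\in\Omega,j\in[m]}\in\mathbb{R}^{m|\Omega|}$, one can compute an exact optimal solution of $$\max_{\hat\Pi\in\mathcal{P}(F)}\ \sum_{i\in[n]}\sum_{\theta^i\in\Theta^i}\hat\Pi^i(\theta^i)\cdot X^i(\theta^i)$$ in time $O\!\left(m|\Omega|\sum_{i\in[n]}|\Theta^i|+\big(\sum_{i\in[n]}|\Theta^i|\big)^2\right)$ (counting arithmetic operations).
   Context: Multi-buyer setting: $n$ buyers, finite state set $\Omega$, action set $A=\{a_1,\dots,a_m\}$. Buyer $i$ has a finite type space $\Theta^i\subseteq\Delta(\Omega)$ and type distribution $F^i$ with $F^i(\theta^i)>0$; types are independent, $\Theta=\prod_i\Theta^i$, $F(\theta)=\prod_iF^i(\theta^i)$, $F^{-i}(\theta^{-i})=\prod_{\ell\ne i}F^\ell(\theta^\ell)$. A (feasible) ex-post signaling scheme specifies, for every $\theta\in\Theta$, numbers $\pi^i_{\omega,j}(\theta)\ge0$ and $p^i(\theta)$ with $\sum_{j}\pi^i_{\omega,j}(\theta)=p^i(\theta)$ for all $i,\omega$ and $\sum_ip^i(\theta)\le1$. Its reduced form is $\hat\Pi^i(\theta^i)=(\hat\pi^i_{\omega,j}(\theta^i))_{\omega,j}$ with $\hat\pi^i_{\omega,j}(\theta^i)=\sum_{\theta^{-i}}F^{-i}(\theta^{-i})\pi^i_{\omega,j}(\theta^i,\theta^{-i})$.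 $\mathcal{P}(F)$ is the set of reduced forms of all feasible ex-post signaling schemes; $\cdot$ is the standard inner product on $\mathbb{R}^{m|\Omega|}$. *)

From mathcomp Require Import all_boot all_order all_algebra.
From mathcomp Require Import reals.
Set Implicit Arguments. Unset Strict Implicit. Unset Printing Implicit Defensive.
Import Order.TTheory GRing.Theory Num.Theory.
Local Open Scope ring_scope.

(* A program works on a growing list of real registers.  Initially the
   registers hold [:: 0; 1] ++ (encoded input). *)
Inductive aop := AAdd | ASub | AMul | ADiv.

Inductive act_tree :=
  | Leaf   of seq nat
  | Arith  of aop & nat & nat & act_tree
  | Branch of nat & nat & act_tree & act_tree.

Definition aop_eval {R : realFieldType} (o : aop) (x y : R) : R :=
  match o with AAdd => x + y | ASub => x - y | AMul => x * y | ADiv => x / y end.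

Fixpoint act_run {R : realFieldType} (t : act_tree) (regs : seq R) : seq R :=
  match t with
  | Leaf out => [seq nth 0 regs q | q <- out]
  | Arith o a b t' => act_run t' (rcons regs (aop_eval o (nth 0 regs a) (nth 0 regs b)))
  | Branch a b t1 t2 =>
      if nth 0 regs a < nth 0 regs b then act_run t1 regs else act_run t2 regs
  end.

Fixpoint act_cost {R : realFieldType} (t : act_tree) (regs : seq R) : nat :=
  match t with
  | Leaf _ => 0%N
  | Arith o a b t' =>
      (act_cost t' (rcons regs (aop_eval o (nth 0 regs a) (nth 0 regs b)))).+1
  | Branch a b t1 t2 =>
      (if nth 0 regs a < nth 0 regs b then act_cost t1 regs else act_cost t2 regs).+1
  end.

(* n buyers ('I_n), m actions ('I_m), k states ('I_k); buyer i has t i types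
   ('I_(t i)).  A type profile is an element of [profile t]. *)
Notation profile t := {dffun forall i : 'I__, 'I_(t i)}.

(* weight vectors X^i(θ^i) and reduced forms Π̂^i(θ^i) have this shape *)
Definition rf_type (R : Type) (n m k : nat) (t : 'I_n -> nat) :=
  forall i : 'I_n, 'I_(t i) -> 'I_k -> 'I_m -> R.
Arguments rf_type : clear implicits.

Definition feasible_expost {R : realFieldType} (n m k : nat) (t : 'I_n -> nat)
  (pi : profile t -> 'I_n -> 'I_k -> 'I_m -> R) (p : profile t -> 'I_n -> R) :=
  [/\ forall th i w j, 0 <= pi th i w j,
      forall th i w, \sum_(j < m) pi th i w j = p th i
    & forall th, \sum_(i < n) p th i <= 1].

Definition reduced_form {R : realFieldType} (n m k : nat) (t : 'I_n -> nat)
  (F : forall i : 'I_n, 'I_(t i) -> R)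
  (pi : profile t -> 'I_n -> 'I_k -> 'I_m -> R) : rf_type R n m k t :=
  fun i thi w j =>
    \sum_(th : profile t | th i == thi)
      (\prod_(l < n | l != i) F l (th l)) * pi th i w j.

Definition in_PF {R : realFieldType} (n m k : nat) (t : 'I_n -> nat)
  (F : forall i : 'I_n, 'I_(t i) -> R) (rf : rf_type R n m k t) : Prop :=
  exists (pi : profile t -> 'I_n -> 'I_k -> 'I_m -> R) (p : profile t -> 'I_n -> R),
    feasible_expost pi p /\ rf = reduced_form F pi.

Definition rf_objective {R : realFieldType} (n m k : nat) (t : 'I_n -> nat)
  (rf X : rf_type R n m k t) : R :=
  \sum_(i < n) \sum_(thi < t i) \sum_(w < k) \sum_(j < m) rf i thi w j * X i thi w j.

Definition enc_dist {R : Type} (n : nat) (t : 'I_n -> nat)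
  (F : forall i : 'I_n, 'I_(t i) -> R) : seq R :=
  flatten [seq [seq F i th | th <- enum 'I_(t i)] | i <- enum 'I_n].

Definition enc_rf {R : Type} (n m k : nat) (t : 'I_n -> nat)
  (rf : rf_type R n m k t) : seq R :=
  flatten [seq flatten [seq flatten [seq [seq rf i th w j | j <- enum 'I_m]
                                    | w <- enum 'I_k]
                       | th <- enum 'I_(t i)]
          | i <- enum 'I_n].

Definition act_input {R : realFieldType} (n m k : nat) (t : 'I_n -> nat)
  (F : forall i : 'I_n, 'I_(t i) -> R) (X : rf_type R n m k t) : seq R :=
  [:: 0; 1] ++ enc_dist F ++ enc_rf X.

From mathcomp Require Import all_boot all_order all_algebra.
From mathcomp Require Import reals.
From mathcomp Require Import zify ring.
Import Order.TTheory GRing.Theory Num.Theory.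
Local Open Scope ring_scope.
Set Implicit Arguments. Unset Strict Implicit. Unset Printing Implicit Defensive.

(* Writing the objective as an expectation over type profiles th, a feasible
   scheme earns, in profile th, at most sum_i F(th) p_i(th) v_i(th^i) where
   the virtual value v_i(th^i) = (sum_w max_j X^i_{w,j}(th^i)) / F^i(th^i).
   Hence it is optimal to give the signal to the buyer of largest positive
   virtual value (ties broken toward the smaller buyer index) and to
   recommend, in each state, uniformly one of the maximising actions.  The
   reduced form of this scheme factorises: for type th^i it is
   [v > 0] * [j maximises] / #maximisers * prod_{l <> i} P[th^i beats l]. *)

Section Factorisation.
Variable R : realFieldType.

Lemma sum_dffun_prod (I : finType) (T_ : I -> finType) (H : forall i, T_ i -> R) :
  \sum_(f : {dffun forall i, T_ i}) \prod_i H i (f i) = \prod_i \sum_(x : T_ i) H i x.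
Proof.
pose J := {i : I & T_ i}.
pose H' (y : J) := H (tag y) (tagged y).
have E1 i : \sum_(x : T_ i) H i x = \sum_(y : J | tagged_with T_ i y) H' y.
  rewrite -[LHS](@big_pred1_eq R 0 +%R _ i (fun i0 => \sum_(x : T_ i0) H i0 x)) /=.
  by rewrite sig_big_dep /=; apply: eq_bigl => y; rewrite andbT.
under [RHS]eq_bigr do rewrite E1.
rewrite (bigA_distr_big_dep (tagged_with T_) (fun _ y => H' y)) [RHS]big_sub.
rewrite [RHS](reindex (@to_family_tagged_with I T_)); last first.
  by apply: onW_bij; apply: to_family_tagged_with_bij.
rewrite [RHS](reindex (@fprod_of_dffun I T_)); last first.
  by apply: onW_bij; apply: fprod_of_dffun_bij.
by apply: eq_bigr => f _; apply: eq_bigr => i _; rewrite /H' /= ffunE.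
Qed.

Lemma sum_profiles_fixed (n : nat) (t : 'I_n -> nat) (i : 'I_n) (th0 : 'I_(t i))
    (G : forall l : 'I_n, 'I_(t l) -> R) :
  \sum_(th : profile t | th i == th0) \prod_(l < n | l != i) G l (th l) =
  \prod_(l < n | l != i) \sum_(x : 'I_(t l)) G l x.
Proof.
pose H (l : 'I_n) (x : 'I_(t l)) := if l == i then ((val x == val th0)%:R : R) else G l x.
have Hi : \sum_(x : 'I_(t i)) H i x = 1.
  rewrite /H eqxx (bigD1 th0) //= eqxx big1 ?addr0 // => x hx.
  by rewrite (inj_eq val_inj) (negbTE hx).
have E : \prod_l \sum_(x : 'I_(t l)) H l x = \prod_(l < n | l != i) \sum_(x : 'I_(t l)) G l x.
  by rewrite (bigD1 i) //= Hi mul1r; apply: eq_bigr => l hl; rewrite /H (negbTE hl).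
rewrite -E -sum_dffun_prod big_mkcond /=; apply: eq_bigr => th _.
rewrite [RHS](bigD1 i) //= {1}/H eqxx (inj_eq val_inj).
case: eqP => _; last by rewrite mul0r.
by rewrite mul1r; apply: eq_bigr => l hl; rewrite /H (negbTE hl).
Qed.

Lemma natr_forall_imply (I : finType) (P B : pred I) :
  ([forall l, P l ==> B l]%:R : R) = \prod_(l | P l) (B l)%:R.
Proof.
case: (boolP [forall l, P l ==> B l]) => h.
  by rewrite big1 // => l hl; move/forallP/(_ l): h; rewrite hl => /= ->.
move: h; rewrite negb_forall => /existsP [l]; rewrite negb_imply => /andP [hl hb].
by rewrite (bigD1 l) //= (negbTE hb) mul0r.
Qed.

Lemma objective_reduced_form (n m k : nat) (t : 'I_n -> nat)
    (F : forall i : 'I_n, 'I_(t i) -> R) (pi : profile t -> 'I_n -> 'I_k -> 'I_m -> R)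
    (X : rf_type R n m k t) :
  rf_objective (reduced_form F pi) X =
  \sum_(th : profile t) \sum_(i < n) (\prod_(l < n | l != i) F l (th l)) *
     \sum_(w < k) \sum_(j < m) pi th i w j * X i (th i) w j.
Proof.
rewrite /rf_objective /reduced_form [RHS]exchange_big /=; apply: eq_bigr => i _.
rewrite [RHS](partition_big (fun th : profile t => th i) xpredT) //=.
apply: eq_bigr => th0 _.
under eq_bigr do under eq_bigr do rewrite big_distrl /=.
under eq_bigr do rewrite exchange_big /=.
rewrite exchange_big /=; apply: eq_bigr => th /eqP hth.
rewrite hth mulr_sumr; apply: eq_bigr => w _; rewrite mulr_sumr; apply: eq_bigr => j _.
by rewrite mulrA.
Qed.

End Factorisation.

Section Winner.
Variables (R : realFieldType) (n : nat) (a : 'I_n -> R).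

Definition beat (i l : 'I_n) : bool :=
  if i == l then true else if (i < l)%N then ~~ (a i < a l) else a l < a i.
Definition wins i := (0 < a i) && [forall l, (l != i) ==> beat i l].

Lemma wins_max i : wins i -> forall l, a l <= a i.
Proof.
case/andP=> _ /forallP h l; have := h l; case: (eqVneq l i) => [->|nli] //= hb.
move: hb; rewrite /beat eq_sym (negbTE nli); case: ifP => _; first by rewrite -leNgt.
exact: ltW.
Qed.

Lemma wins_unique i l : wins i -> wins l -> i = l.
Proof.
move=> /andP [_ /forallP hi] /andP [_ /forallP hl]; apply/eqP; apply: contraT => nil.
have bil : beat i l by have := hi l; rewrite eq_sym nil.
have bli : beat l i by have := hl i; rewrite nil.
move: bil bli; rewrite /beat (negbTE nil) eq_sym (negbTE nil).
case: (ltngtP i l) => h /=.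
- by move=> /negP.
- by move=> h1 /negP.
- by move/val_inj: h nil => ->; rewrite eqxx.
Qed.

Lemma wins_exists l0 : 0 < a l0 -> exists i, wins i.
Proof.
move=> hl0.
have [im _ him] := @extremumP _ _ (fun x y : R => y <= x) l0 xpredT a
  (fun x => le_refl x) (fun x y z hyx hzy => le_trans hzy hyx)
  (fun x y => le_total y x) (erefl true).
have [j /eqP hj hmin] :=
  @arg_minnP _ im (fun j => a j == a im) (fun j : 'I_n => (j : nat)) (eqxx (a im)).
exists j; apply/andP; split; first by rewrite hj; apply: lt_le_trans hl0 (him _ _).
apply/forallP => l; apply/implyP => nlj; rewrite /beat eq_sym (negbTE nlj).
have hle : a l <= a j by rewrite hj; exact: him.
case: ifP => hjl; first by rewrite -leNgt.
rewrite lt_neqAle hle andbT; apply/negP => /eqP e.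
have := hmin l; rewrite e hj eqxx => /(_ isT).
have : (l < j)%N by rewrite ltn_neqAle leqNgt hjl andbT; apply: contra nlj => /eqP/val_inj ->.
by move=> h1 h2; move: (leq_trans h1 h2); rewrite ltnn.
Qed.

Lemma wins_sum_le1 : \sum_i (wins i)%:R <= 1 :> R.
Proof.
case: (pickP wins) => [i wi|nw]; last by rewrite big1 => [|l _]; rewrite ?nw.
rewrite (bigD1 i) //= big1 => [|l nli]; first by rewrite wi addr0.
by apply/eqP; rewrite pnatr_eq0 eqb0; apply: contra nli => wl; rewrite (wins_unique wl wi).
Qed.

Lemma wins_optimal (p : 'I_n -> R) : (forall i, 0 <= p i) -> \sum_i p i <= 1 ->
  \sum_i p i * a i <= \sum_i (wins i)%:R * a i.
Proof.
move=> p0 p1; case: (pickP wins) => [i wi|nw].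
  rewrite [X in _ <= X](bigD1 i) //= [X in _ <= _ + X]big1 => [|l nli]; last first.
    have /negbTE -> : ~~ wins l by apply: contra nli => wl; rewrite (wins_unique wl wi).
    by rewrite mul0r.
  rewrite wi mul1r addr0.
  have ai0 : 0 <= a i by case/andP: wi => /ltW.
  apply: (@le_trans _ _ (\sum_l p l * a i)).
    by apply: ler_sum => l _; apply: ler_wpM2l => //; apply: wins_max.
  by rewrite -mulr_suml; apply: ler_piMl.
rewrite [X in _ <= X]big1 => [|l _]; last by rewrite nw mul0r.
apply: sumr_le0 => l _; apply: mulr_ge0_le0 => //.
by rewrite leNgt; apply/negP => /wins_exists [i]; rewrite nw.
Qed.

End Winner.

Inductive instr := IOp of aop & nat & nat | ISel of nat & nat & nat & nat.

Definition nop := IOp AAdd 0 0.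

Definition instr_reads (ins : instr) : nat :=
  match ins with
  | IOp _ a b => maxn a b
  | ISel a b x y => maxn (maxn a b) (maxn x y)
  end.

Definition eval_instr {R : realFieldType} (L : seq R) (ins : instr) : R :=
  match ins with
  | IOp o a b => aop_eval o (nth 0 L a) (nth 0 L b)
  | ISel a b x y => if nth 0 L a < nth 0 L b then nth 0 L x else nth 0 L y
  end.

Definition exec {R : realFieldType} (regs : seq R) (P : seq instr) : seq R :=
  foldl (fun L ins => rcons L (eval_instr L ins)) regs P.

(* A selection becomes a comparison
   whose two branches copy the selected register (adding register 0, which
   holds 0), so every instruction costs at most two steps. *)
Fixpoint compile (P : seq instr) (K : act_tree) : act_tree :=
  match P with
  | [::] => K
  | IOp o a b :: P' => Arith o a b (compile P' K)
  | ISel a b x y :: P' =>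
      Branch a b (Arith AAdd x 0 (compile P' K)) (Arith AAdd y 0 (compile P' K))
  end.

(* P reads, at its q-th instruction, only registers below s + q: every
   instruction reads registers that exist when a run starting with s
   registers reaches it. *)
Definition reads_before (s : nat) (P : seq instr) :=
  forall q, (q < size P)%N -> (instr_reads (nth nop P q) < s + q)%N.

Section StraightLine.
Variable R : realFieldType.
Implicit Types (regs L : seq R) (P : seq instr).

Lemma exec_cons regs ins P :
  exec regs (ins :: P) = exec (rcons regs (eval_instr regs ins)) P.
Proof. by []. Qed.

Lemma exec_cat regs P1 P2 : exec regs (P1 ++ P2) = exec (exec regs P1) P2.
Proof. exact: foldl_cat. Qed.

Lemma exec_extends regs P : exists V, exec regs P = regs ++ V.
Proof.
elim: P regs => [|ins P IH] regs; first by exists [::]; rewrite cats0.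
rewrite exec_cons; have [V ->] := IH (rcons regs (eval_instr regs ins)).
by exists (eval_instr regs ins :: V); rewrite -cats1 -catA.
Qed.

Lemma size_exec regs P : size (exec regs P) = (size regs + size P)%N.
Proof.
elim: P regs => [|ins P IH] regs; first by rewrite addn0.
by rewrite exec_cons IH size_rcons addSnnS.
Qed.

Lemma nth_exec_input regs P a :
  (a < size regs)%N -> nth 0 (exec regs P) a = nth 0 regs a.
Proof. by move=> ha; have [V ->] := exec_extends regs P; rewrite nth_cat ha. Qed.

Lemma eval_instr_ext L L' ins :
  (forall a, (a <= instr_reads ins)%N -> nth 0 L a = nth 0 L' a) ->
  eval_instr L ins = eval_instr L' ins.
Proof.
by case: ins => [o a b|a b x y] /= h; rewrite !h // ?leq_max leqnn ?orbT.
Qed.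

(* the compiled tree outputs what the program computes, in at most two steps
   per instruction (register 0 must hold 0 for the copies) *)
Lemma compile_run P K regs : nth 0 regs 0 = 0 -> (0 < size regs)%N ->
  act_run (compile P K) regs = act_run K (exec regs P) /\
  (act_cost (compile P K) regs <= 2 * size P + act_cost K (exec regs P))%N.
Proof.
elim: P regs => [|ins P IH] regs r0 hs //; rewrite exec_cons.
have IHr v : act_run (compile P K) (rcons regs v) = act_run K (exec (rcons regs v) P) /\
    (act_cost (compile P K) (rcons regs v) <= 2 * size P + act_cost K (exec (rcons regs v) P))%N.
  by apply: IH; rewrite ?nth_rcons ?hs ?size_rcons.
case: ins => [o a b|a b x y] /=.
  have [-> c] := IHr (aop_eval o (nth 0 regs a) (nth 0 regs b)); split=> //.
  (* name the costs so that lia treats convertible occurrences as one atom *)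
  by move: c; set d := act_cost K _; set e := act_cost _ _; lia.
by case: ifP => _ /=; rewrite r0 addr0;
  [have [-> c] := IHr (nth 0 regs x) | have [-> c] := IHr (nth 0 regs y)];
  split=> //; move: c; set d := act_cost K _; set e := act_cost _ _; lia.
Qed.

Lemma exec_block_nth regs pre B post p :
  reads_before (size regs + size pre) B -> (p < size B)%N ->
  let L := exec regs (pre ++ B ++ post) in
  nth 0 L (size regs + size pre + p) = eval_instr L (nth nop B p).
Proof.
move=> hB hp L.
pose E := exec regs (pre ++ take p B).
have sE : size E = (size regs + size pre + p)%N.
  by rewrite size_exec size_cat size_take hp addnA.
have EL : L = exec (rcons E (eval_instr E (nth nop B p))) (drop p.+1 B ++ post).
  by rewrite /L -{1}(cat_take_drop p B) (drop_nth nop hp) -catA cat_cons catA exec_cat exec_cons.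
have [V EV] := exec_extends (rcons E (eval_instr E (nth nop B p))) (drop p.+1 B ++ post).
rewrite {1}EL EV nth_cat size_rcons -sE ltnSn nth_rcons ltnn eqxx.
apply: eval_instr_ext => a ha.
have haE : (a < size E)%N by rewrite sE; have := hB p hp; lia.
by rewrite EL EV nth_cat size_rcons ltnS ltnW // nth_rcons haE.
Qed.

End StraightLine.

Definition grid {T} (c1 c2 : nat) (f : nat -> nat -> T) : seq T :=
  flatten (mkseq (fun a => mkseq (f a) c2) c1).

Lemma sumn_map_const T (s : seq T) c : sumn [seq c | _ <- s] = (size s * c)%N.
Proof. by elim: s => //= x s ->; rewrite mulSn. Qed.

Lemma size_grid T c1 c2 (f : nat -> nat -> T) : size (grid c1 c2 f) = (c1 * c2)%N.
Proof.
rewrite size_flatten /shape -map_comp (@eq_map _ _ _ (fun=> c2)).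
  by rewrite sumn_map_const size_iota.
by move=> a /=; rewrite size_mkseq.
Qed.

Lemma ltn_grid c1 c2 a b : (a < c1)%N -> (b < c2)%N -> (a * c2 + b < c1 * c2)%N.
Proof.
move=> ha hb; apply: (@leq_trans (a.+1 * c2)); first by rewrite mulSn; lia.
by rewrite leq_mul2r ha orbT.
Qed.

Lemma nth_flatten_const T (x0 : T) (ss : seq (seq T)) c a b :
  all (fun s => size s == c) ss -> (b < c)%N -> (a < size ss)%N ->
  nth x0 (flatten ss) (a * c + b) = nth x0 (nth [::] ss a) b.
Proof.
elim: ss a => [|s ss IH] a //= /andP [/eqP sz hs] hb ha.
rewrite nth_cat sz; case: a ha => [|a] ha /=; first by rewrite mul0n add0n hb.
rewrite ifN; last by rewrite -leqNgt mulSn -addnA leq_addr.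
by rewrite mulSn -addnA addKn IH.
Qed.

Lemma nth_grid T (x0 : T) c1 c2 f a b : (a < c1)%N -> (b < c2)%N ->
  nth x0 (grid c1 c2 f) (a * c2 + b) = f a b.
Proof.
move=> ha hb; rewrite nth_flatten_const ?size_mkseq ?nth_mkseq //.
by rewrite /mkseq all_map; apply/allP => a' _ /=; rewrite size_mkseq.
Qed.

Lemma reads_before_grid s c1 c2 f :
  (forall a b, (a < c1)%N -> (b < c2)%N -> (instr_reads (f a b) < s + (a * c2 + b))%N) ->
  reads_before s (grid c1 c2 f).
Proof.
move=> h q; rewrite size_grid => hq.
have c2p : (0 < c2)%N by move: hq; case: (c2) => //; rewrite muln0.
have hb : (q %% c2 < c2)%N by rewrite ltn_pmod.
have ha : (q %/ c2 < c1)%N by rewrite ltn_divLR.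
by rewrite (divn_eq q c2) nth_grid //; apply: h.
Qed.

Section Program.
(* S types in total, n buyers, m actions, k states.  Type u belongs to buyer
   [owner u]; buyer l owns the types [first l] <= u < [first l.+1]. *)
Variables (S n m k : nat) (owner first : nat -> nat).
Local Open Scope nat_scope.

(* Input layout: r0 = 0, r1 = 1, r(2 + u) = F(u), and the weight of action j
   in row a = u * k + w (type u, state w) at [xin a j]. *)
Definition ninputs := 2 + S + S * k * m.
Definition fin u := 2 + u.
Definition xin a j := 2 + S + (a * m + j).

(* The program has 14 phases; phase q is a [rows q] x [cols q] grid whose
   cell (a, b) is written to register [cell q a b]. *)
Definition shapes : seq (nat * nat) :=
  [:: (S * k, m); (S * k, m); (S * k, m.+1); (S, k.+1); (S, 1); (S, S); (S, S);
      (S, S.+1); (S, n); (S, n.+1); (S, 1); (S, 1); (S, k); (S * k, m)].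
Definition rows q := (nth (0, 0) shapes q).1.
Definition cols q := (nth (0, 0) shapes q).2.
Definition cell q a b :=
  ninputs + sumn [seq d.1 * d.2 | d <- take q shapes] + (a * cols q + b).

Definition rMax a j := cell 0 a j.    (* maximum of row a over actions <= j *)
Definition rArg a j := cell 1 a j.    (* indicator: j maximises row a *)
Definition rCnt a j := cell 2 a j.    (* number of maximisers of row a below j *)
Definition rTot u w := cell 3 u w.    (* sum of the row maxima of u over states < w *)
Definition rVal u := cell 4 u 0.      (* virtual value of type u *)
Definition rBeat u v := cell 5 u v.   (* indicator: u beats v *)
Definition rWgt u v := cell 6 u v.    (* F(v) if u beats v, else 0 *)
Definition rPre u p := cell 7 u p.    (* sum of rWgt u v over v < p *)
Definition rBlk u l := cell 8 u l.    (* probability that u beats buyer l *)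
Definition rProd u l := cell 9 u l.   (* product of rBlk u l' over l' < l *)
Definition rPos u := cell 10 u 0.     (* indicator: positive virtual value *)
Definition rWin u := cell 11 u 0.     (* interim probability that u wins *)
Definition rShare u w := cell 12 u w. (* rWin u divided by the maximiser count *)
Definition rOut a j := cell 13 a j.   (* output: reduced form entry *)

Definition copy r := IOp AAdd r 0.

(* cX a b is the instruction writing register rX a b; running sums and
   products start from r0 = 0 and r1 = 1, and comparisons are selections
   between r0 and r1 *)
Definition cMax a j := if j is j'.+1 then ISel (rMax a j') (xin a j) (xin a j) (rMax a j')
                       else copy (xin a 0).
Definition cArg a j := ISel (xin a j) (rMax a m.-1) 0 1.
Definition cCnt a j := if j is j'.+1 then IOp AAdd (rCnt a j') (rArg a j') else copy 0.
Definition cTot u w := if w is w'.+1 then IOp AAdd (rTot u w') (rMax (u * k + w') m.-1)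
                       else copy 0.
Definition cVal u (_ : nat) := IOp ADiv (rTot u k) (fin u).
Definition cBeat u v :=
  if owner u == owner v then copy 1
  else if owner u < owner v then ISel (rVal u) (rVal v) 0 1 else ISel (rVal v) (rVal u) 1 0.
Definition cWgt u v := IOp AMul (fin v) (rBeat u v).
Definition cPre u p := if p is p'.+1 then IOp AAdd (rPre u p') (rWgt u p') else copy 0.
Definition cBlk u l := IOp ASub (rPre u (first l.+1)) (rPre u (first l)).
Definition cProd u l := if l is l'.+1 then IOp AMul (rProd u l') (rBlk u l') else copy 1.
Definition cPos u (_ : nat) := ISel 0 (rVal u) 1 0.
Definition cWin u (_ : nat) := IOp AMul (rProd u n) (rPos u).
Definition cShare u w := IOp ADiv (rWin u) (rCnt (u * k + w) m).
(* in row-major layout, rShare u w is cell 12 0 (u * k + w) *)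
Definition cOut a j := IOp AMul (rArg a j) (cell 12 0 a).

Definition phase q (f : nat -> nat -> instr) := grid (rows q) (cols q) f.
Definition blocks :=
  [:: phase 0 cMax; phase 1 cArg; phase 2 cCnt; phase 3 cTot; phase 4 cVal;
      phase 5 cBeat; phase 6 cWgt; phase 7 cPre; phase 8 cBlk; phase 9 cProd;
      phase 10 cPos; phase 11 cWin; phase 12 cShare; phase 13 cOut].
Definition prog := flatten blocks.
Definition outputs := [seq rOut 0 p | p <- iota 0 (S * k * m)].
Definition tree := compile prog (Leaf outputs).

Lemma shape_blocks : shape blocks = [seq d.1 * d.2 | d <- shapes].
Proof. by rewrite /shape /= /phase !size_grid. Qed.

Hypothesis m_gt0 : 0 < m.

Lemma size_prog : n <= S -> size prog <= 12 * (S * k * m + S * S).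
Proof.
move=> hn; rewrite size_flatten shape_blocks /= !mulnS ?muln0 ?addn0.
have f1 : S * k <= S * k * m by rewrite leq_pmulr.
have f2 : S <= S * S by case: (S) => // s; rewrite leq_pmulr.
have f3 : S * n <= S * S by rewrite leq_mul2l hn orbT.
lia.
Qed.

Definition reads_ok q f :=
  forall a b, a < rows q -> b < cols q -> instr_reads (f a b) < cell q a b.

Hypothesis first_le : forall l, l <= n -> first l <= S.

Ltac layout :=
  unfold rMax, rArg, rCnt, rTot, rVal, rBeat, rWgt, rPre, rBlk, rProd, rPos, rWin,
    rShare, rOut, cell, rows, cols, shapes, xin, fin, copy, ninputs in *;
  simpl in *; rewrite ?gtn_max.

Lemma pred_m_lt : m.-1 < m. Proof. by rewrite prednK. Qed.

Lemma reads_Max : reads_ok 0 cMax.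
Proof. by move=> a [|j] ha hj /=; have := ltn_grid ha hj; layout; lia. Qed.

Lemma reads_Arg : reads_ok 1 cArg.
Proof.
move=> a j ha hj /=; have := ltn_grid ha hj; have := ltn_grid ha pred_m_lt.
by layout; lia.
Qed.

Lemma reads_Cnt : reads_ok 2 cCnt.
Proof.
move=> a [|j] ha hj /=; first by layout; lia.
by have := ltn_grid ha (_ : j < m); layout; lia.
Qed.

Lemma reads_Tot : reads_ok 3 cTot.
Proof.
move=> u [|w] hu hw /=; first by layout; lia.
by have := ltn_grid (ltn_grid hu (_ : w < k)) pred_m_lt; layout; lia.
Qed.

Lemma reads_Val : reads_ok 4 cVal.
Proof. by move=> u b hu hb /=; have := ltn_grid hu (ltnSn k); layout; lia. Qed.

Lemma reads_Beat : reads_ok 5 cBeat.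
Proof. by move=> u v hu hv; rewrite /cBeat; do 2?case: ifP => _; layout; lia. Qed.

Lemma reads_Wgt : reads_ok 6 cWgt.
Proof. by move=> u v hu hv /=; have := ltn_grid hu hv; layout; lia. Qed.

Lemma reads_Pre : reads_ok 7 cPre.
Proof.
move=> u [|p] hu hp /=; first by layout; lia.
by have := ltn_grid hu (_ : p < S); layout; lia.
Qed.

Lemma reads_Blk : reads_ok 8 cBlk.
Proof.
move=> u l hu hl /=; have hl' : l < n by move: hl; layout.
have h1 : first l < S.+1 by rewrite ltnS first_le // ltnW.
have h2 : first l.+1 < S.+1 by rewrite ltnS first_le.
by have := ltn_grid hu h1; have := ltn_grid hu h2; layout; lia.
Qed.

Lemma reads_Prod : reads_ok 9 cProd.
Proof.
move=> u [|l] hu hl /=; first by layout; lia.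
by have := ltn_grid hu (_ : l < n); layout; lia.
Qed.

Lemma reads_Pos : reads_ok 10 cPos.
Proof. by move=> u b hu hb /=; layout; lia. Qed.

Lemma reads_Win : reads_ok 11 cWin.
Proof. by move=> u b hu hb /=; have := ltn_grid hu (ltnSn n); layout; lia. Qed.

Lemma reads_Share : reads_ok 12 cShare.
Proof.
by move=> u w hu hw /=; have := ltn_grid (ltn_grid hu hw) (ltnSn m); layout; lia.
Qed.

Lemma reads_Out : reads_ok 13 cOut.
Proof. by move=> a j ha hj /=; have := ltn_grid ha hj; layout; lia. Qed.

Section Execution.
Local Open Scope ring_scope.
Variables (R : realFieldType) (regs : seq R).
Hypotheses (size_regs : size regs = ninputs) (reg0 : nth 0 regs 0 = 0)
  (reg1 : nth 0 regs 1 = 1).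

Let Lr := exec regs prog.

Lemma cell_value q f a b : nth [::] blocks q = phase q f -> reads_ok q f ->
  (a < rows q)%N -> (b < cols q)%N -> nth 0 Lr (cell q a b) = eval_instr Lr (f a b).
Proof.
move=> hq hf ha hb.
have qs : (q < size blocks)%N.
  by rewrite ltnNge; apply/negP => hge; move: ha; rewrite /rows nth_default.
have Eprog : prog = flatten (take q blocks) ++ phase q f ++ flatten (drop q.+1 blocks).
  by rewrite /prog -{1}(cat_take_drop q blocks) (drop_nth [::] qs) hq flatten_cat.
have Epre : size (flatten (take q blocks)) = sumn [seq d.1 * d.2 | d <- take q shapes].
  by rewrite size_flatten /shape map_take -/(shape blocks) shape_blocks map_take.
have hp : (a * cols q + b < size (phase q f))%N by rewrite size_grid ltn_grid.
rewrite /Lr Eprog /cell -size_regs -Epre exec_block_nth // ?nth_grid //.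
apply: reads_before_grid => a' b' ha' hb'; rewrite Epre size_regs; exact: hf.
Qed.

Lemma value_input a : (a < ninputs)%N -> nth 0 Lr a = nth 0 regs a.
Proof. by move=> ha; rewrite /Lr nth_exec_input // size_regs. Qed.

Lemma value0 : nth 0 Lr 0 = 0.
Proof. by rewrite value_input. Qed.

Lemma value1 : nth 0 Lr 1 = 1.
Proof. by rewrite value_input. Qed.

Definition xv a j := nth 0 regs (xin a j).
Definition fv u := nth 0 regs (fin u).
Fixpoint pmax a j := if j is j'.+1 then Num.max (pmax a j') (xv a j) else xv a 0.
Definition rowmax a := pmax a m.-1.
Definition isArg a j : R := if xv a j < rowmax a then 0 else 1.
Definition nArgs a j := \sum_(j' < j) isArg a j'.
Definition totmax u w := \sum_(w' < w) rowmax (u * k + w').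
Definition vval u := totmax u k / fv u.
Definition beats u v :=
  if owner u == owner v then true
  else if (owner u < owner v)%N then ~~ (vval u < vval v) else vval v < vval u.
Definition wgt u v := fv v * (beats u v)%:R.
Definition wsum u p := \sum_(p' < p) wgt u p'.
Definition blockp u l := wsum u (first l.+1) - wsum u (first l).
Definition prodp u l := \prod_(l' < l) blockp u l'.
Definition posv u : R := ((0 < vval u)%R)%:R.
Definition winp u := prodp u n * posv u.
Definition share u w := winp u / nArgs (u * k + w) m.

Lemma xin_input a j : (a < S * k)%N -> (j < m)%N -> (xin a j < ninputs)%N.
Proof. by move=> ha hj; have := ltn_grid ha hj; rewrite /xin /ninputs; lia. Qed.

Lemma val_Max a j : (a < S * k)%N -> (j < m)%N -> nth 0 Lr (rMax a j) = pmax a j.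
Proof.
move=> ha; elim: j => [|j IH] hj;
  rewrite /rMax (cell_value (f := cMax)) //=; try exact: reads_Max.
  by rewrite value0 addr0 value_input // xin_input.
by rewrite -/(rMax a j) IH ?(ltnW hj) // value_input // xin_input.
Qed.

Lemma val_Arg a j : (a < S * k)%N -> (j < m)%N -> nth 0 Lr (rArg a j) = isArg a j.
Proof.
move=> ha hj; rewrite /rArg (cell_value (f := cArg)) //=; last exact: reads_Arg.
by rewrite -/(rMax a m.-1) val_Max ?pred_m_lt // value_input ?xin_input // value0 value1.
Qed.

Lemma val_Cnt a j : (a < S * k)%N -> (j <= m)%N -> nth 0 Lr (rCnt a j) = nArgs a j.
Proof.
move=> ha; elim: j => [|j IH] hj;
  rewrite /rCnt (cell_value (f := cCnt)) //=; try exact: reads_Cnt.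
  by rewrite value0 addr0 /nArgs big_ord0.
by rewrite -/(rCnt a j) -/(rArg a j) IH ?(ltnW hj) // val_Arg // /nArgs big_ord_recr.
Qed.

Lemma val_Tot u w : (u < S)%N -> (w <= k)%N -> nth 0 Lr (rTot u w) = totmax u w.
Proof.
move=> hu; elim: w => [|w IH] hw;
  rewrite /rTot (cell_value (f := cTot)) //=; try exact: reads_Tot.
  by rewrite value0 addr0 /totmax big_ord0.
rewrite -/(rTot u w) -/(rMax _ _) IH ?(ltnW hw) // val_Max ?pred_m_lt ?ltn_grid //.
by rewrite /totmax big_ord_recr.
Qed.

Lemma val_Val u : (u < S)%N -> nth 0 Lr (rVal u) = vval u.
Proof.
move=> hu; rewrite /rVal (cell_value (f := cVal)) //=; last exact: reads_Val.
by rewrite -/(rTot u k) val_Tot // value_input // /fin /ninputs; lia.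
Qed.

Lemma val_Beat u v : (u < S)%N -> (v < S)%N -> nth 0 Lr (rBeat u v) = (beats u v)%:R.
Proof.
move=> hu hv; rewrite /rBeat (cell_value (f := cBeat)) //; last exact: reads_Beat.
rewrite /cBeat /beats; case: ifP => _; first by rewrite /= value1 value0 addr0.
by case: ifP => _ /=; rewrite -!/(rVal _) !val_Val // value0 value1; case: ifP.
Qed.

Lemma val_Wgt u v : (u < S)%N -> (v < S)%N -> nth 0 Lr (rWgt u v) = wgt u v.
Proof.
move=> hu hv; rewrite /rWgt (cell_value (f := cWgt)) //=; last exact: reads_Wgt.
by rewrite -/(rBeat u v) val_Beat // value_input // /fin /ninputs; lia.
Qed.

Lemma val_Pre u p : (u < S)%N -> (p <= S)%N -> nth 0 Lr (rPre u p) = wsum u p.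
Proof.
move=> hu; elim: p => [|p IH] hp;
  rewrite /rPre (cell_value (f := cPre)) //=; try exact: reads_Pre.
  by rewrite value0 addr0 /wsum big_ord0.
by rewrite -/(rPre u p) -/(rWgt u p) IH ?(ltnW hp) // val_Wgt // /wsum big_ord_recr.
Qed.

Lemma val_Blk u l : (u < S)%N -> (l < n)%N -> nth 0 Lr (rBlk u l) = blockp u l.
Proof.
move=> hu hl; rewrite /rBlk (cell_value (f := cBlk)) //=; last exact: reads_Blk.
by rewrite -!/(rPre _ _) !val_Pre ?first_le // ltnW.
Qed.

Lemma val_Prod u l : (u < S)%N -> (l <= n)%N -> nth 0 Lr (rProd u l) = prodp u l.
Proof.
move=> hu; elim: l => [|l IH] hl;
  rewrite /rProd (cell_value (f := cProd)) //=; try exact: reads_Prod.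
  by rewrite value0 value1 addr0 /prodp big_ord0.
by rewrite -/(rProd u l) -/(rBlk u l) IH ?(ltnW hl) // val_Blk // /prodp big_ord_recr.
Qed.

Lemma val_Pos u : (u < S)%N -> nth 0 Lr (rPos u) = posv u.
Proof.
move=> hu; rewrite /rPos (cell_value (f := cPos)) //=; last exact: reads_Pos.
by rewrite -/(rVal u) val_Val // value0 value1 /posv; case: ifP.
Qed.

Lemma val_Win u : (u < S)%N -> nth 0 Lr (rWin u) = winp u.
Proof.
move=> hu; rewrite /rWin (cell_value (f := cWin)) //=; last exact: reads_Win.
by rewrite -/(rProd u n) -/(rPos u) val_Prod // val_Pos.
Qed.

Lemma val_Share u w : (u < S)%N -> (w < k)%N -> nth 0 Lr (rShare u w) = share u w.
Proof.
move=> hu hw; rewrite /rShare (cell_value (f := cShare)) //=; last exact: reads_Share.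
by rewrite -/(rWin u) -/(rCnt _ _) val_Win // val_Cnt // ltn_grid.
Qed.

Lemma val_Out u w j : (u < S)%N -> (w < k)%N -> (j < m)%N ->
  nth 0 Lr (rOut (u * k + w) j) = isArg (u * k + w) j * share u w.
Proof.
move=> hu hw hj; have ha := ltn_grid hu hw.
rewrite /rOut (cell_value (f := cOut)) //=; last exact: reads_Out.
have -> : cell 12 0 (u * k + w) = rShare u w by rewrite /rShare /cell mul0n add0n.
by rewrite -/(rArg _ _) val_Arg // val_Share.
Qed.

Lemma pmax_ge a j0 j : (j <= j0)%N -> xv a j <= pmax a j0.
Proof.
elim: j0 => [|j0 IH] hj; first by move: hj; rewrite leqn0 => /eqP ->.
rewrite /= le_max; case: (ltngtP j j0.+1) => h.
- by rewrite IH.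
- by move: h; rewrite ltnNge hj.
- by rewrite h lexx orbT.
Qed.

Lemma pmax_attained a j0 : exists2 j, (j <= j0)%N & xv a j = pmax a j0.
Proof.
elim: j0 => [|j0 [j hj e]]; first by exists 0%N.
rewrite /= /Num.max; case: ifP => _; first by exists j0.+1.
by exists j => //; rewrite (leq_trans hj).
Qed.

Lemma rowmax_ge a j : (j < m)%N -> xv a j <= rowmax a.
Proof. by move=> hj; apply: pmax_ge; rewrite -ltnS prednK. Qed.

Lemma isArg_ge0 a j : 0 <= isArg a j.
Proof. by rewrite /isArg; case: ifP. Qed.

(* spreading weight uniformly over the maximisers collects the row maximum *)
Lemma isArg_sum a : \sum_(j < m) isArg a j * xv a j = nArgs a m * rowmax a.
Proof.
rewrite /nArgs mulr_suml; apply: eq_bigr => j _; rewrite /isArg.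
case: ifP => h; first by rewrite !mul0r.
by rewrite !mul1r; apply/eqP; rewrite eq_le rowmax_ge // leNgt h.
Qed.

Lemma nArgs_gt0 a : 0 < nArgs a m.
Proof.
have [j hj e] := pmax_attained a m.-1.
have hj' : (j < m)%N by rewrite (leq_ltn_trans hj) // pred_m_lt.
rewrite /nArgs (bigD1 (Ordinal hj')) //= {1}/isArg /rowmax -e ltxx.
by rewrite ltr_pwDl // sumr_ge0 // => i _; apply: isArg_ge0.
Qed.

Lemma tree_run : act_run tree regs = [seq nth 0 Lr (rOut 0 p) | p <- iota 0 (S * k * m)] /\
  (act_cost tree regs <= 2 * size prog)%N.
Proof.
have hs : (0 < size regs)%N by rewrite size_regs /ninputs.
have [-> c] := compile_run prog (Leaf outputs) reg0 hs.
by split; [rewrite /= -map_comp | move: c; rewrite /= addn0].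
Qed.

End Execution.
End Program.

Lemma nth_flatten_shape T (x0 : T) (ss : seq (seq T)) r c :
  (r < size ss)%N -> (c < size (nth [::] ss r))%N ->
  nth x0 (flatten ss) (sumn (take r (shape ss)) + c) = nth x0 (nth [::] ss r) c.
Proof.
elim: ss r => [|s ss IH] [|r] //= hr hc; first by rewrite nth_cat hc.
rewrite nth_cat ifN; last by rewrite -leqNgt -addnA leq_addr.
by rewrite -addnA addKn IH.
Qed.

Lemma nth_cat_size T (x0 : T) s1 s2 q : nth x0 (s1 ++ s2) (size s1 + q) = nth x0 s2 q.
Proof. by rewrite nth_cat ifN ?addKn // -leqNgt leq_addr. Qed.

Lemma nth_flatten_ord T (x0 : T) c d (g : 'I_c -> seq T) (w : 'I_c) b :
  (forall w, size (g w) = d) -> (b < d)%N ->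
  nth x0 (flatten [seq g w | w <- enum 'I_c]) (w * d + b) = nth x0 (g w) b.
Proof.
move=> hg hb; rewrite nth_flatten_const ?size_map ?size_enum_ord //.
- by rewrite (nth_map w) ?size_enum_ord // nth_ord_enum.
- by rewrite all_map; apply/allP => w' _ /=; rewrite hg.
- by rewrite -enumT size_enum_ord.
Qed.

(* The types of all buyers, listed buyer by buyer as in the input encoding;
   buyer l's types occupy positions [first_type l] .. [first_type l.+1 - 1]. *)
Section TypeList.
Variables (n : nat) (t : 'I_n -> nat).
Local Notation J := {i : 'I_n & 'I_(t i)}.

Definition type_block (i : 'I_n) : seq J :=
  map (@Tagged 'I_n i (fun i => 'I_(t i))) (enum 'I_(t i)).
Definition type_list := flatten (map type_block (enum 'I_n)).
Definition type_counts := [seq t i | i <- enum 'I_n].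
Definition first_type l := sumn (take l type_counts).
Definition ntypes := (\sum_(i < n) t i)%N.

Lemma shape_type_list : shape (map type_block (enum 'I_n)) = type_counts.
Proof. by rewrite /shape -map_comp; apply: eq_map => i /=; rewrite size_map size_enum_ord. Qed.

Lemma sumn_type_counts : sumn type_counts = ntypes.
Proof. by rewrite sumnE big_map big_enum. Qed.

Lemma size_type_list : size type_list = ntypes.
Proof. by rewrite size_flatten shape_type_list sumn_type_counts. Qed.

Lemma first_typeS (l : 'I_n) : first_type l.+1 = (first_type l + t l)%N.
Proof.
have hl : (l < size type_counts)%N by rewrite size_map size_enum_ord.
rewrite /first_type (take_nth 0%N hl) sumn_rcons.
by rewrite (nth_map l) ?size_enum_ord // nth_ord_enum.
Qed.

Lemma first_type_le l : (first_type l <= ntypes)%N.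
Proof.
by rewrite /first_type -sumn_type_counts -{2}(cat_take_drop l type_counts) sumn_cat leq_addr.
Qed.

Lemma first_type_lt (i : 'I_n) (th : 'I_(t i)) : (first_type i + th < ntypes)%N.
Proof. by apply: leq_trans (first_type_le i.+1); rewrite first_typeS ltn_add2l. Qed.

Lemma nth_type_list x0 (i : 'I_n) (th : 'I_(t i)) :
  nth x0 type_list (first_type i + th) = Tagged (fun i => 'I_(t i)) th.
Proof.
have hi : (i < size (map type_block (enum 'I_n)))%N by rewrite size_map size_enum_ord.
rewrite /type_list /first_type -shape_type_list nth_flatten_shape //.
  by rewrite (nth_map i) ?size_enum_ord // nth_ord_enum (nth_map th) ?size_enum_ord // nth_ord_enum.
by rewrite (nth_map i) ?size_enum_ord // nth_ord_enum size_map size_enum_ord.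
Qed.

Lemma uniq_type_list : uniq type_list.
Proof.
have mem_tl (x : J) : x \in type_list.
  case: x => i th; apply/flattenP; exists (type_block i); first by apply: map_f; rewrite mem_enum.
  by apply: map_f; rewrite mem_enum.
apply: (leq_size_uniq (enum_uniq (J : finType))); first by move=> x _; apply: mem_tl.
rewrite size_type_list -cardE card_tagged -sumn_type_counts; apply: eq_leq; congr sumn.
by apply: eq_map => i; rewrite card_ord.
Qed.

Lemma type_list_position x0 u : (u < ntypes)%N ->
  let x := nth x0 type_list u in u = (first_type (tag x) + tagged x)%N.
Proof.
move=> hu x; have ex : x = Tagged (fun i => 'I_(t i)) (tagged x) by case: (x).
have := nth_type_list x0 (tagged x); rewrite -ex => /(congr1 (index ^~ type_list)).
by rewrite !index_uniq ?uniq_type_list ?size_type_list ?first_type_lt.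
Qed.

End TypeList.

Section Encodings.
Variables (R : realFieldType) (n m k : nat) (t : 'I_n -> nat).
Local Notation J := {i : 'I_n & 'I_(t i)}.

Lemma enc_dist_type_list (F : forall i : 'I_n, 'I_(t i) -> R) :
  enc_dist F = [seq F (tag x) (tagged x) | x <- type_list t].
Proof.
rewrite /enc_dist /type_list map_flatten -map_comp; congr flatten.
by apply: eq_map => i /=; rewrite /type_block -map_comp.
Qed.

Definition type_entries (X : rf_type R n m k t) (x : J) : seq R :=
  flatten [seq [seq X (tag x) (tagged x) w j | j <- enum 'I_m] | w <- enum 'I_k].

Lemma enc_rf_type_list (X : rf_type R n m k t) :
  enc_rf X = flatten [seq type_entries X x | x <- type_list t].
Proof.
have flatten_map_flatten (f : J -> seq R) (ss : seq (seq J)) :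
    flatten (map f (flatten ss)) = flatten (map (fun s => flatten (map f s)) ss).
  by elim: ss => //= s ss IH; rewrite map_cat flatten_cat IH.
rewrite /type_list flatten_map_flatten -map_comp /enc_rf; congr flatten.
by apply: eq_map => i /=; rewrite /type_block -map_comp.
Qed.

Lemma size_type_entries (X : rf_type R n m k t) x : size (type_entries X x) = (k * m)%N.
Proof.
rewrite size_flatten /shape -map_comp (@eq_map _ _ _ (fun=> m)).
  by rewrite sumn_map_const size_enum_ord.
by move=> w /=; rewrite size_map size_enum_ord.
Qed.

Lemma size_enc_rf (X : rf_type R n m k t) : size (enc_rf X) = (ntypes t * k * m)%N.
Proof.
rewrite enc_rf_type_list size_flatten /shape -map_comp (@eq_map _ _ _ (fun=> (k * m)%N)).
  by rewrite sumn_map_const size_type_list mulnA.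
by move=> x /=; rewrite size_type_entries.
Qed.

Lemma size_enc_dist (F : forall i : 'I_n, 'I_(t i) -> R) : size (enc_dist F) = ntypes t.
Proof. by rewrite enc_dist_type_list size_map size_type_list. Qed.

Lemma nth_enc_rf x0 (X : rf_type R n m k t) u (w : 'I_k) (j : 'I_m) : (u < ntypes t)%N ->
  let x := nth x0 (type_list t) u in
  nth 0 (enc_rf X) ((u * k + w) * m + j) = X (tag x) (tagged x) w j.
Proof.
move=> hu x; rewrite enc_rf_type_list.
have -> : ((u * k + w) * m + j = u * (k * m) + (w * m + j))%N by rewrite mulnDl mulnA addnA.
rewrite nth_flatten_const ?size_map ?size_type_list ?ltn_grid //; last first.
  by rewrite all_map; apply/allP => y _ /=; rewrite size_type_entries.
rewrite (nth_map x0) ?size_type_list // -/x /type_entries.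
rewrite (@nth_flatten_ord _ _ _ m) => [|w'|] //; last by rewrite size_map; exact: size_enum_ord.
by rewrite (nth_map j) ?size_enum_ord // nth_ord_enum.
Qed.

End Encodings.

(* F and X below take the buyer index explicitly *)
Unset Implicit Arguments.

Section Instance.
Variables (R : realFieldType) (n m k : nat) (t : 'I_n -> nat).
Hypotheses (t_gt0 : forall l, (0 < t l)%N) (m_gt0 : (0 < m)%N) (k_gt0 : (0 < k)%N)
  (n_gt0 : (0 < n)%N).
Local Notation J := {i : 'I_n & 'I_(t i)}.
Local Notation S := (ntypes t).

Definition some_type : J := Tagged (fun i => 'I_(t i)) (Ordinal (t_gt0 (Ordinal n_gt0))).

Definition owner (u : nat) : nat := val (tag (nth some_type (type_list t) u)).

Lemma owner_first_type (i : 'I_n) (th : 'I_(t i)) : owner (first_type t i + th) = i.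
Proof. by rewrite /owner nth_type_list. Qed.

Variables (F : forall i : 'I_n, 'I_(t i) -> R) (X : rf_type R n m k t).
Hypotheses (F_gt0 : forall i th, 0 < F i th) (F_sum1 : forall i, \sum_(th < t i) F i th = 1).

Local Notation input := (act_input F X).
Local Notation first := (first_type t).
Local Notation vval := (vval S m k input).
Local Notation isArg := (isArg S m input).
Local Notation nArgs := (nArgs S m input).
Local Notation totmax := (totmax S m k input).
Local Notation beats := (beats S m k owner input).
Local Notation share := (share S n m k owner first input).

Lemma size_input : size input = ninputs S m k.
Proof. by rewrite /act_input !size_cat size_enc_dist size_enc_rf. Qed.

Lemma fv_first_type (i : 'I_n) (th : 'I_(t i)) : fv input (first i + th) = F i th.
Proof.
rewrite /fv /fin /act_input (nth_cat_size _ [:: 0; 1]) nth_cat size_enc_dist first_type_lt.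
by rewrite enc_dist_type_list (nth_map some_type) ?size_type_list ?first_type_lt // nth_type_list.
Qed.

Lemma xv_first_type (i : 'I_n) (th : 'I_(t i)) (w : 'I_k) (j : 'I_m) :
  xv S m input ((first i + th) * k + w) j = X i th w j.
Proof.
rewrite /xv /xin /act_input -addnA (nth_cat_size _ [:: 0; 1]).
by rewrite -(size_enc_dist F) nth_cat_size (nth_enc_rf some_type) ?first_type_lt // nth_type_list.
Qed.

Definition type_pos (th : profile t) (i : 'I_n) : nat := (first i + th i)%N.
Definition virtual (th : profile t) (l : 'I_n) : R := vval (type_pos th l).
Definition winner (th : profile t) (i : 'I_n) : R := (wins (virtual th) i)%:R.
Definition scheme (th : profile t) (i : 'I_n) (w : 'I_k) (j : 'I_m) : R :=
  winner th i * (isArg (type_pos th i * k + w) j / nArgs (type_pos th i * k + w) m).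

Lemma scheme_feasible : feasible_expost scheme winner.
Proof.
have n0 (a : nat) : nArgs a m != 0 by rewrite gt_eqF // nArgs_gt0.
split.
- move=> th i w j; rewrite /scheme /winner mulr_ge0 ?ler0n // divr_ge0 ?isArg_ge0 //.
  exact/ltW/nArgs_gt0.
- move=> th i w; rewrite /scheme -mulr_sumr -mulr_suml.
  by rewrite -/(nArgs (type_pos th i * k + w) m) divff ?mulr1.
- by move=> th; apply: wins_sum_le1.
Qed.

Lemma winner_expand th i :
  winner th i = posv S m k input (type_pos th i) *
    \prod_(l | l != i) (beats (type_pos th i) (type_pos th l))%:R.
Proof.
rewrite /winner /wins -mulnb natrM natr_forall_imply; congr (_ * _).
by apply: eq_bigr => l _; rewrite /beat /beats /type_pos !owner_first_type.
Qed.

Lemma blockp_first_type u (l : 'I_n) :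
  blockp S m k owner first input u l = \sum_(x < t l) F l x * (beats u (first l + x))%:R.
Proof.
rewrite /blockp /wsum first_typeS big_split_ord /= addrAC subrr add0r.
by apply: eq_bigr => x _; rewrite /wgt fv_first_type.
Qed.

(* closed form of the reduced form of the scheme: this is what the program
   computes *)
Lemma reduced_form_scheme (i : 'I_n) (th0 : 'I_(t i)) (w : 'I_k) (j : 'I_m) :
  let u := (first i + th0)%N in
  reduced_form F scheme th0 w j = isArg (u * k + w) j * share u w.
Proof.
move=> u; rewrite /reduced_form.
pose G l (x : 'I_(t l)) := F l x * (beats u (first l + x))%:R.
have E (th : profile t) : th i == th0 ->
    (\prod_(l < n | l != i) F l (th l)) * scheme th i w j =
    posv S m k input u * (isArg (u * k + w) j / nArgs (u * k + w) m) *
    \prod_(l < n | l != i) G l (th l).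
  move=> /eqP hth; rewrite /scheme winner_expand /type_pos hth -/u big_split /=; ring.
rewrite (eq_bigr _ E) -mulr_sumr sum_profiles_fixed /share /winp /prodp.
have own : \sum_(x < t i) G i x = 1.
  by rewrite -[RHS](F_sum1 i); apply: eq_bigr => x _; rewrite /G /beats !owner_first_type eqxx mulr1.
rewrite (eq_bigr _ (fun l _ => blockp_first_type u l)) [in RHS](bigD1 i) //= -/(G i) own.
by ring.
Qed.

Lemma reduced_form_output u (w : 'I_k) (j : 'I_m) : (u < S)%N ->
  let x := nth some_type (type_list t) u in
  isArg (u * k + w) j * share u w = reduced_form F scheme (tagged x) w j.
Proof. by move=> hu x; rewrite reduced_form_scheme -(type_list_position some_type hu). Qed.

(* Optimality.  For each profile, the value of any feasible ex-post scheme is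
   at most sum_i F(th) * p_i * virtual_i, which the winner allocation
   maximises; the scheme attains it. *)
Lemma others_ge0 (th : profile t) i : 0 <= \prod_(l < n | l != i) F l (th l).
Proof. by apply: prodr_ge0 => l _; apply: ltW. Qed.

Lemma others_totmax (th : profile t) i :
  (\prod_(l < n | l != i) F l (th l)) * totmax (type_pos th i) k =
  (\prod_(l < n) F l (th l)) * virtual th i.
Proof.
rewrite /virtual /vval /type_pos fv_first_type [X in _ = X * _](bigD1 i) //=.
by have := F_gt0 i (th i); rewrite lt0r => /andP [hne _]; field.
Qed.

(* in each state the recommendation yields at most the row maximum *)
Lemma value_bound pi p (hfe : feasible_expost pi p) (th : profile t) i :
  \sum_(w < k) \sum_(j < m) pi th i w j * X i (th i) w j <= p th i * totmax (type_pos th i) k.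
Proof.
case: hfe => h0 h1 _; rewrite /totmax mulr_sumr; apply: ler_sum => w _.
rewrite -(h1 th i w) mulr_suml; apply: ler_sum => j _.
by rewrite -xv_first_type; apply: ler_wpM2l => //; apply: rowmax_ge.
Qed.

Lemma value_scheme (th : profile t) i :
  \sum_(w < k) \sum_(j < m) scheme th i w j * X i (th i) w j =
  winner th i * totmax (type_pos th i) k.
Proof.
rewrite /totmax mulr_sumr; apply: eq_bigr => w _; set a := (type_pos th i * k + w)%N.
rewrite (eq_bigr (fun j : 'I_m => winner th i / nArgs a m * (isArg a j * xv S m input a j)));
  last by move=> j _; rewrite /scheme -/a /a /type_pos xv_first_type; ring.
have hc : nArgs a m != 0 by rewrite gt_eqF // nArgs_gt0.
by rewrite -mulr_sumr isArg_sum //; field.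
Qed.

Lemma scheme_optimal (rf' : rf_type R n m k t) : in_PF F rf' ->
  rf_objective rf' X <= rf_objective (reduced_form F scheme) X.
Proof.
case=> pi [p [hfe ->]]; rewrite !objective_reduced_form; apply: ler_sum => th _.
have reweight (q : 'I_n -> R) :
    \sum_i (\prod_(l < n | l != i) F l (th l)) * (q i * totmax (type_pos th i) k) =
    (\prod_(l < n) F l (th l)) * \sum_i q i * virtual th i.
  by rewrite mulr_sumr; apply: eq_bigr => i _; rewrite mulrCA others_totmax; ring.
apply: (@le_trans _ _ (\sum_i (\prod_(l < n | l != i) F l (th l)) *
                              (p th i * totmax (type_pos th i) k))).
  by apply: ler_sum => i _; apply: ler_wpM2l; [apply: others_ge0 | apply: value_bound].
under [X in _ <= X]eq_bigr do rewrite value_scheme.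
rewrite !reweight; apply: ler_wpM2l; first by apply: prodr_ge0 => l _; apply: ltW.
case: hfe => h0 h1 h2; apply: wins_optimal (h2 th) => i.
by rewrite -(h1 th i (Ordinal k_gt0)); apply: sumr_ge0.
Qed.

Lemma n_le_ntypes : (n <= S)%N.
Proof.
have : (\sum_(i < n) 1 <= S)%N by apply: leq_sum => i _; apply: t_gt0.
by rewrite sum1_card card_ord.
Qed.

Lemma tree_output : act_run (tree S n m k owner first) input = enc_rf (reduced_form F scheme).
Proof.
have [-> _] := tree_run n owner first size_input (erefl _).
apply: (@eq_from_nth _ 0); first by rewrite size_map size_iota size_enc_rf.
move=> p; rewrite size_map size_iota => hp.
rewrite (nth_map 0%N) ?size_iota // nth_iota // add0n.
have hkm : (0 < k * m)%N by rewrite muln_gt0 k_gt0 m_gt0.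
set a := (p %/ m)%N.
have ha : (a < S * k)%N by rewrite ltn_divLR // -mulnA.
have hw : (a %% k < k)%N by rewrite ltn_pmod.
have hu : (a %/ k < S)%N by rewrite ltn_divLR.
have hj : (p %% m < m)%N by rewrite ltn_pmod.
have Ep : p = ((a %/ k * k + Ordinal hw) * m + Ordinal hj)%N by rewrite /= -!divn_eq.
rewrite Ep (nth_enc_rf some_type) // -reduced_form_output //.
have := @val_Out S n m k owner first m_gt0 (fun l _ => first_type_le t l) R input
  size_input (erefl _) (erefl _) _ _ _ hu hw hj.
by rewrite /rOut /cell mul0n add0n.
Qed.

Lemma instance_correct : let T := tree S n m k owner first in
  (act_cost T input <= 24 * (m * k * S + S * S))%N /\
  exists rf, [/\ in_PF F rf, act_run T input = enc_rf rf &
    forall rf', in_PF F rf' -> rf_objective rf' X <= rf_objective rf X].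
Proof.
split; last first.
  exists (reduced_form F scheme); split; [| exact: tree_output | exact: scheme_optimal].
  by exists scheme, winner; split; [exact: scheme_feasible|].
have [_ hcost] := tree_run n owner first size_input (erefl _).
apply: (leq_trans hcost); have := size_prog k owner first m_gt0 n_le_ntypes.
by rewrite (mulnC m k) (mulnC (k * m) S) mulnA; lia.
Qed.

End Instance.

(* With no action, state or buyer, every reduced form has objective 0 and an
   empty encoding; the zero scheme is optimal. *)
Lemma degenerate_instance (R : realFieldType) n m k t
    (F : forall i : 'I_n, 'I_(t i) -> R) (X : rf_type R n m k t) :
  (m = 0 \/ k = 0 \/ n = 0)%N ->
  exists rf : rf_type R n m k t, [/\ in_PF F rf, [::] = enc_rf rf &
    forall rf', in_PF F rf' -> rf_objective rf' X <= rf_objective rf X].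
Proof.
move=> H; have obj0 rf : rf_objective rf X = 0.
  rewrite /rf_objective; case: H => [e|[e|e]]; subst; last by rewrite big_ord0.
    by do 3 (rewrite big1 // => ? _); rewrite big_ord0.
  by do 2 (rewrite big1 // => ? _); rewrite big_ord0.
exists (reduced_form F (fun _ _ _ _ => 0)); split.
- exists (fun _ _ _ _ => 0), (fun _ _ => 0); split=> //; split=> // [th i w|th]; by rewrite big1.
- apply/esym/size0nil; rewrite size_enc_rf /ntypes.
  by case: H => [e|[e|e]]; subst; rewrite ?muln0 ?big_ord0.
- by move=> rf' _; rewrite !obj0.
Qed.

Theorem mainTheorem11 (R : realType) :
  exists C : nat,
  forall (n m k : nat) (t : 'I_n -> nat),
  exists T : act_tree,
  forall (F : forall i : 'I_n, 'I_(t i) -> R) (X : rf_type R n m k t),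
    (forall i th, 0 < F i th) ->
    (forall i, \sum_(th < t i) F i th = 1) ->
    let S := (\sum_(i < n) t i)%N in
    (act_cost T (act_input F X) <= C * (m * k * S + S * S))%N /\
    exists rf : rf_type R n m k t,
      [/\ in_PF F rf,
          act_run T (act_input F X) = enc_rf rf
        & forall rf', in_PF F rf' -> rf_objective rf' X <= rf_objective rf X].
Proof.
exists 24%N => n m k t.
have [degenerate|] := boolP [|| m == 0, k == 0 | n == 0]%N.
  exists (Leaf [::]) => F X _ _ S; split => //.
  by apply: degenerate_instance; case/or3P: degenerate => /eqP; auto.
rewrite !negb_or -!lt0n => /and3P [m_gt0 k_gt0 n_gt0].
have [/forallP t_gt0|] := boolP [forall l : 'I_n, 0 < t l]%N; last first.
  (* a buyer without types contradicts sum F = 1 *)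
  rewrite negb_forall => /existsP [l]; rewrite -eqn0Ngt => /eqP tl0.
  exists (Leaf [::]) => F X _ F_sum1; have := F_sum1 l.
  by rewrite big1 => [/eqP|[x hx] _]; [rewrite eq_sym oner_eq0 | exfalso; move: hx; rewrite tl0].
exists (tree (ntypes t) n m k (owner n t t_gt0 n_gt0) (first_type t)) => F X F_gt0 F_sum1.
exact: instance_correct.
Qed.
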